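(* Let $|\Psi\rangle$ be any pure single-qubit non-stabilizer state whose density matrix lies in the set $P_Y$. Then any $\omega$-witness $|\omega\rangle$ achieving $|\langle\Psi|\omega\rangle|^2=\xi(\Psi)$ satisfies $$|\omega\rangle\langle\omega|=\frac{I+qH+\sqrt{1-q^2}\,Y}{1+q/\sqrt2},\qquad H=(X+Z)/\sqrt2,$$ for some $q$ with $\sqrt{2/3}\le q\le1$. Furthermore, if $|\Psi\rangle\langle\Psi|$ is in $P_Y\cap P_X$ or in $P_Y\cap P_Z$, then $q=\sqrt{2/3}$, i.e. $$|\omega\rangle\langle\omega|=\frac{I+(X+Y+Z)/\sqrt3}{1+1/\sqrt3}.$$
   Context: $X,Y,Z$ are the Pauli matrices; the single-qubit pure stabilizer states are $|0\rangle,|1\rangle,|\pm\rangle,|\pm_i\rangle$. An $\omega$-witness is a vector $|\omega\rangle\in\mathbb C^2$ with $|\langle\omega|\phi\rangle|\le1$ for all pure single-qubit stabilizer states $|\phi\rangle$; $\xi(\Psi)=\min\{\|c\|_1^2:|\Psi\rangle=\sum_jc_j|\phi_j\rangle,\ |\phi_j\rangle\text{ stabilizer}\}$. Writing $\langle M\rangle=\mathrm{Tr}[\rho M]$: the positive octant is $P=\{\rho:\langle X\rangle,\langle Y\rangle,\langle Z\rangle\ge0\}$, and $P_X=\{\rho\in P:\langle X\rangle\le\langle Y\rangle,\ \langle X\rangle\le\langle Z\rangle\}$, $P_Y=\{\rho\in P:\langle Y\rangle\le\langle X\rangle,\ \langle Y\rangle\le\langle Z\rangle\}$, $P_Z=\{\rho\in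 P:\langle Z\rangle\le\langle X\rangle,\ \langle Z\rangle\le\langle Y\rangle\}$. *)

From HB Require Import structures.
From mathcomp Require Import all_boot all_order all_algebra.
From mathcomp Require Import complex.
Set Implicit Arguments. Unset Strict Implicit. Unset Printing Implicit Defensive.
Import Order.TTheory GRing.Theory Num.Theory.
Import ComplexField Normc.
Local Open Scope ring_scope.
Local Open Scope complex_scope.

Section Qubit.
Variable R : rcfType.
Local Notation C := R[i].

Definition cabs (z : C) : R := normc z.

Definition vec2 (a b : C) : 'cV[C]_2 :=
  \col_(i < 2) (if val i == 0%N then a else b).

Definition mat2 (a b c d : C) : 'M[C]_2 :=
  \matrix_(i < 2, j < 2)
    (if val i == 0%N then (if val j == 0%N then a else b)
     else (if val j == 0%N then c else d)).

Definition PX : 'M[C]_2 := mat2 0 1 1 0.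
Definition PY : 'M[C]_2 := mat2 0 (- 'i) 'i 0.
Definition PZ : 'M[C]_2 := mat2 1 0 0 (-1).

Definition adj (v : 'cV[C]_2) : 'rV[C]_2 := (map_mx (@conjc R) v)^T.
Definition braket (u v : 'cV[C]_2) : C := (adj u *m v) 0 0.
Definition proj (v : 'cV[C]_2) : 'M[C]_2 := v *m adj v.

Definition isr2 : C := (Num.sqrt (2 : R))^-1%:C.
Definition stab (k : 'I_6) : 'cV[C]_2 :=
  match val k with
  | 0 => vec2 1 0
  | 1 => vec2 0 1
  | 2 => isr2 *: vec2 1 1
  | 3 => isr2 *: vec2 1 (-1)
  | 4 => isr2 *: vec2 1 'i
  | _ => isr2 *: vec2 1 (- 'i)
  end.

Definition is_stab (v : 'cV[C]_2) : Prop :=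
  exists (k : 'I_6) (u : C), cabs u = 1 /\ v = u *: stab k.

Definition is_witness (w : 'cV[C]_2) : Prop :=
  forall phi, is_stab phi -> cabs (braket w phi) <= 1.

Definition is_decomp (psi : 'cV[C]_2) (s : seq (C * 'cV[C]_2)) : Prop :=
  (forall p, p \in s -> is_stab p.2) /\ psi = \sum_(p <- s) p.1 *: p.2.

Definition cost (s : seq (C * 'cV[C]_2)) : R := (\sum_(p <- s) cabs p.1) ^+ 2.

Definition xi_is (psi : 'cV[C]_2) (r : R) : Prop :=
  (exists s, is_decomp psi s /\ cost s = r) /\
  (forall s, is_decomp psi s -> r <= cost s).

(* <M> = Tr[rho M] (real for Hermitian rho, M) *)
Definition ev (rho M : 'M[C]_2) : R := complex.Re (\tr (rho *m M)).

Definition inP (rho : 'M[C]_2) : Prop :=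
  0 <= ev rho PX /\ 0 <= ev rho PY /\ 0 <= ev rho PZ.
Definition inPX (rho : 'M[C]_2) : Prop :=
  inP rho /\ ev rho PX <= ev rho PY /\ ev rho PX <= ev rho PZ.
Definition inPY (rho : 'M[C]_2) : Prop :=
  inP rho /\ ev rho PY <= ev rho PX /\ ev rho PY <= ev rho PZ.
Definition inPZ (rho : 'M[C]_2) : Prop :=
  inP rho /\ ev rho PZ <= ev rho PX /\ ev rho PZ <= ev rho PY.

Definition PH : 'M[C]_2 := isr2 *: (PX + PZ).

Definition omega_q (q : R) : 'M[C]_2 :=
  ((1 + q / Num.sqrt 2)^-1)%:C *:
    (1%:M + q%:C *: PH + (Num.sqrt (1 - q ^+ 2))%:C *: PY).

Definition omega_sym : 'M[C]_2 :=
  ((1 + (Num.sqrt 3)^-1)^-1)%:C *: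
    (1%:M + ((Num.sqrt (3 : R))^-1)%:C *: (PX + PY + PZ)).

End Qubit.

From HB Require Import structures.
From mathcomp Require Import all_boot all_order all_algebra.
From mathcomp Require Import complex.
From mathcomp Require Import ring lra.
Import Order.TTheory GRing.Theory Num.Theory.
Import ComplexField Normc.
Local Open Scope ring_scope.
Local Open Scope complex_scope.
Set Implicit Arguments. Unset Strict Implicit. Unset Printing Implicit Defensive.

(* Describe a vector w by its squared norm n and the expectations
   r = (<X>, <Y>, <Z>) in w, so that |r| = n, |w><w| = (n I + r.sigma) / 2 and
   2 |<w|phi>|^2 = n n' + r.r' for another vector phi with data (n', r').
   Testing against the six stabilizer states, w is an omega-witness iff
   n + |r_i| <= 2 for each i.  By the triangle inequality |<w|psi>| <= ||c||_1
   for every witness and every stabilizer decomposition of psi, so a witness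
   with |<psi|omega>|^2 = xi(psi) maximises n + r.p over all witnesses, p being
   the Bloch vector of psi.  For p in P_Y and psi not a stabilizer state,
   p_x + p_z > 1, and explicit Lagrange multipliers show that every maximiser
   has r = n (a, b, a) with 0 <= b <= a and n + r_x = 2, where b = a if
   p_y = p_x or p_y = p_z.  This is the claimed projector, with
   q = sqrt 2 r_x / n. *)

Section WitnessProgram.
Variable R : rcfType.

Lemma sqr3_eq0 (a b c : R) : a ^+ 2 + b ^+ 2 + c ^+ 2 = 0 -> [/\ a = 0, b = 0 & c = 0].
Proof.
move=> h; have := sqr_ge0 a; have := sqr_ge0 b; have := sqr_ge0 c => *.
by split; apply/eqP; rewrite -sqrf_eq0 eq_le sqr_ge0 andbT; lra.
Qed.

Lemma addr_norm_le (a b x : R) : (a + `|x| <= b) = (a + x <= b) && (a - x <= b).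
Proof.
have [x0|x0] := leP 0 x; [rewrite ger0_norm // | rewrite ltr0_norm //].
all: by apply/idP/andP => [h|[]]; [split|]; lra.
Qed.

Lemma dot_le_norm (n x y z dx dy dz : R) : 0 <= n ->
  x ^+ 2 + y ^+ 2 + z ^+ 2 = n ^+ 2 -> dx ^+ 2 + dy ^+ 2 + dz ^+ 2 = 1 ->
  x * dx + y * dy + z * dz <= n.
Proof.
move=> n0 hr hd.
have lagrange : (x * dx + y * dy + z * dz) ^+ 2 + ((x * dy - y * dx) ^+ 2
    + (x * dz - z * dx) ^+ 2 + (y * dz - z * dy) ^+ 2) = n ^+ 2.
  by rewrite -[n ^+ 2]mulr1 -hd -hr; ring.
have := sqr_ge0 (x * dy - y * dx); have := sqr_ge0 (x * dz - z * dx).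
have := sqr_ge0 (y * dz - z * dy); nra.
Qed.

Lemma dot_eq_norm (n x y z dx dy dz : R) :
  x ^+ 2 + y ^+ 2 + z ^+ 2 = n ^+ 2 -> dx ^+ 2 + dy ^+ 2 + dz ^+ 2 = 1 ->
  x * dx + y * dy + z * dz = n -> [/\ x = n * dx, y = n * dy & z = n * dz].
Proof.
move=> hr hd hrd.
have : (x - n * dx) ^+ 2 + (y - n * dy) ^+ 2 + (z - n * dz) ^+ 2 = 0.
  rewrite (_ : _ + _ = x ^+ 2 + y ^+ 2 + z ^+ 2 - 2 * n * (x * dx + y * dy + z * dz)
    + n ^+ 2 * (dx ^+ 2 + dy ^+ 2 + dz ^+ 2)); first by rewrite hr hd hrd; ring.
  by ring.
by case/sqr3_eq0 => /subr0_eq -> /subr0_eq -> /subr0_eq ->.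
Qed.

Definition witness_point (n x y z : R) : Prop :=
  [/\ 0 <= n, x ^+ 2 + y ^+ 2 + z ^+ 2 = n ^+ 2,
      n + `|x| <= 2, n + `|y| <= 2 & n + `|z| <= 2].

Variables px py pz : R.

(* [2 |<w|psi>|^2] for a witness [w] with Bloch data [(n, x, y, z)] and a
   unit state [psi] with Bloch vector [p]. *)
Definition witness_value (n x y z : R) : R := n + x * px + y * py + z * pz.

(* Multipliers [mx], [my], [mz] for the faces [n + x <= 2], [n + y <= 2],
   [n + z <= 2] and [l] for the cone [|(x, y, z)| <= n], whose supporting
   direction is the unit vector [d]; [p = m + l d] is the stationarity
   condition. *)
Definition dual_certificate (mx my mz l dx dy dz : R) : Prop :=
  [/\ [/\ 0 <= mx, 0 <= my, 0 <= mz & 0 < l], dx ^+ 2 + dy ^+ 2 + dz ^+ 2 = 1,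
      mx + my + mz - l = 1
    & [/\ mx + l * dx = px, my + l * dy = py & mz + l * dz = pz]].

Section Certificate.
Variables mx my mz l dx dy dz : R.
Hypothesis cert : dual_certificate mx my mz l dx dy dz.

Lemma certificate_value (n x y z : R) : witness_value n x y z =
  2 * (mx + my + mz) - (mx * (2 - n - x) + my * (2 - n - y) + mz * (2 - n - z)
                        + l * (n - (x * dx + y * dy + z * dz))).
Proof.
rewrite /witness_value; have [_ _ hsum [<- <- <-]] := cert.
rewrite -[n in LHS]mulr1 -hsum; ring.
Qed.

Lemma certificate_slack (n x y z : R) : witness_point n x y z ->
  [/\ 0 <= mx * (2 - n - x), 0 <= my * (2 - n - y), 0 <= mz * (2 - n - z)
    & 0 <= l * (n - (x * dx + y * dy + z * dz))].
Proof.
have [[mx0 my0 mz0 l0] hd _ _] := cert.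
case=> n0 hr; rewrite !addr_norm_le => /andP[? _] /andP[? _] /andP[? _].
split; apply: mulr_ge0; rewrite ?subr_ge0 ?(ltW l0) //; try lra.
exact: dot_le_norm.
Qed.

Lemma certificate_tight (n x y z : R) : witness_point n x y z ->
  2 * (mx + my + mz) <= witness_value n x y z ->
  [/\ [/\ x = n * dx, y = n * dy & z = n * dz],
      0 < mx -> n + x = 2, 0 < my -> n + y = 2 & 0 < mz -> n + z = 2].
Proof.
move=> w; have [s1 s2 s3 s4] := certificate_slack w.
rewrite certificate_value => hle.
have pos_factor (m t : R) : 0 < m -> m * t = 0 -> t = 0.
  by move=> /gt_eqF m0 /eqP; rewrite mulf_eq0 m0 => /eqP.
have [[_ _ _ l0] hd _ _] := cert; have [_ hr _ _ _] := w.
have ex : mx * (2 - n - x) = 0 by lra.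
have ey : my * (2 - n - y) = 0 by lra.
have ez : mz * (2 - n - z) = 0 by lra.
have el : l * (n - (x * dx + y * dy + z * dz)) = 0 by lra.
split=> [|m0|m0|m0]; last 3 first.
- by have := pos_factor _ _ m0 ex; lra.
- by have := pos_factor _ _ m0 ey; lra.
- by have := pos_factor _ _ m0 ez; lra.
by apply: dot_eq_norm => //; have := pos_factor _ _ l0 el; lra.
Qed.
End Certificate.

Lemma certificate_optimum (mx my mz l a b n x y z : R) :
  dual_certificate mx my mz l a b a -> 0 <= b <= a -> my * (a - b) = 0 ->
  witness_point n x y z ->
  (forall n' x' y' z', witness_point n' x' y' z' ->
     witness_value n' x' y' z' <= witness_value n x y z) ->
  [/\ x = n * a, y = n * b, z = n * a & n + x = 2].
Proof.
move=> cert /andP[b0 ba] my_slack w hmax.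
have [[mx0 my0 mz0 l0] hd hsum _] := cert.
(* The dual value is attained at the witness point [t (1, a, b, a)]. *)
set t := 2 / (1 + a).
have t0 : 0 <= t by rewrite divr_ge0 //; lra.
have ta : t + t * a = 2 by rewrite /t; field; lra.
have tb : t * b <= t * a by rewrite ler_wpM2l.
have wt : witness_point t (t * a) (t * b) (t * a).
  have [ta0 tb0] : 0 <= t * a /\ 0 <= t * b by split; apply: mulr_ge0; lra.
  split; rewrite ?(ger0_norm ta0) ?(ger0_norm tb0) //; try lra.
  by rewrite !exprMn -!mulrDr hd mulr1.
have vt : witness_value t (t * a) (t * b) (t * a) = 2 * (mx + my + mz).
  have e_a : 2 - t - t * a = 0 by lra.
  have e_b : 2 - t - t * b = t * (a - b) by lra.
  have e_d : t - (t * a * a + t * b * b + t * a * a) = t * (1 - (a ^+ 2 + b ^+ 2 + a ^+ 2)).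
    by ring.
  rewrite (certificate_value cert) e_a e_b e_d hd mulrCA my_slack; ring.
have opt : 2 * (mx + my + mz) <= witness_value n x y z by rewrite -vt; exact: hmax wt.
have [[ex ey ez] hx hy hz] := certificate_tight cert w opt.
split=> //.
have [_ _ hxle _ _] := w; move: hxle; rewrite addr_norm_le => /andP[hxle _].
have [mx_pos|mx_le0] := ltrP 0 mx; first exact: hx.
have [mz_pos|mz_le0] := ltrP 0 mz; first by rewrite ex -ez hz.
have my_pos : 0 < my by lra.
have : n * b <= n * a by rewrite ler_wpM2l //; case: w.
by have := hy my_pos; lra.
Qed.

Section Certificates.
Let A := px + pz - 1.
Let S := Num.sqrt (2 * (A ^+ 2 + py ^+ 2)).

Lemma sqrS : S ^+ 2 = 2 * (A ^+ 2 + py ^+ 2).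
Proof. by rewrite sqr_sqrtr // mulr_ge0 ?addr_ge0 ?sqr_ge0. Qed.

Lemma A_lt_S : 0 < A -> A < S.
Proof.
move=> A0; rewrite -[A in A < _]gtr0_norm // -sqrtr_sqr /S ltr_sqrt; last by nra.
have := sqr_ge0 py; nra.
Qed.

(* When the face [n + y <= 2] is inactive ([my = 0]) the direction is
   [(A - l, 2 py, A - l) / (2 l)], and [|d| = 1] forces [l = S - A]. *)
Lemma edge_certificate : px ^+ 2 + py ^+ 2 + pz ^+ 2 = 1 -> 0 <= py -> 0 < A ->
  S <= 2 * (A - py) ->
  exists mx mz l a b, [/\ dual_certificate mx 0 mz l a b a, 0 <= b <= a
    & py < px /\ py < pz].
Proof.
move=> p1 py0 A0 edge; have SA := A_lt_S A0; have S2 := sqrS.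
have eA : A = px + pz - 1 by [].
have [px1 pz1] : px <= 1 /\ pz <= 1 by split; nra.
set l := S - A; have el : l = S - A by [].
have l0 : 0 < l by lra.
have l_neq0 : l != 0 by rewrite gt_eqF.
have key : (A - l) ^+ 2 + 2 * py ^+ 2 = 2 * l ^+ 2 by rewrite el; lra.
exists (px - (A - l) / 2), (pz - (A - l) / 2), l, ((A - l) / (2 * l)), (py / l).
split; last by lra.
  split; [by split; lra | | by lra | by split; field].
  rewrite (_ : _ + _ = ((A - l) ^+ 2 + 2 * py ^+ 2) / (2 * l ^+ 2)); last by field.
  by rewrite key divff // gt_eqF // mulr_gt0 // exprn_gt0.
rewrite divr_ge0 ?(ltW l0) //= ler_pdivrMr //.
have -> : (A - l) / (2 * l) * l = (A - l) / 2 by field.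
lra.
Qed.

(* Otherwise all three faces are active and [d = (1, 1, 1) / sqrt 3]. *)
Lemma center_certificate : px ^+ 2 + py ^+ 2 + pz ^+ 2 = 1 ->
  0 <= py <= px -> py <= pz -> 0 < A -> 2 * (A - py) < S ->
  exists mx my mz l t, dual_certificate mx my mz l t t t /\ 0 <= t.
Proof.
move=> p1 /andP[py0 pyx] pyz A0 center; have S2 := sqrS.
have eA : A = px + pz - 1 by [].
have S0 : 0 <= S := sqrtr_ge0 _.
set s3 := Num.sqrt (3 : R).
have s3_sqr : s3 ^+ 2 = 3 by rewrite sqr_sqrtr ?ler0n.
have s3_gt0 : 0 < s3 by rewrite sqrtr_gt0 ltr0n.
have A_le : A <= py * (2 + s3).
  have [|A_gt] := lerP A (2 * py); first by have := mulr_ge0 py0 (ltW s3_gt0); lra.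
  have : (A - 2 * py) ^+ 2 < (s3 * py) ^+ 2.
    rewrite exprMn s3_sqr.
    have : (2 * (A - py)) ^+ 2 < S ^+ 2 by rewrite ltr_sqr ?nnegrE //; lra.
    lra.
  by rewrite ltr_sqr ?nnegrE ?mulr_ge0 ?(ltW s3_gt0) //; lra.
set t := s3^-1; set l := (A + py) / (1 + s3).
have t3 : 3 * t = s3 by rewrite -s3_sqr expr2 mulfK // gt_eqF.
have lt : l * t = (A + py) / (3 + s3).
  by rewrite -mulrA -invfM [(1 + s3) * s3]mulrDl mul1r -expr2 s3_sqr [s3 + 3]addrC.
have t0 : 0 < t by rewrite invr_gt0.
have l0 : 0 < l by rewrite divr_gt0 //; lra.
have lt_le : l * t <= py by rewrite lt ler_pdivrMr; lra.
exists (px - l * t), (py - l * t), (pz - l * t), l, t; split; last exact: ltW.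
have l1 : l * (1 + s3) = A + py by rewrite mulfVK // gt_eqF //; lra.
have l3t : l * (3 * t) = l * s3 by rewrite t3.
split; rewrite ?subrK //; first (by split; lra); last by lra.
by rewrite /t exprVn s3_sqr; field.
Qed.

Lemma witness_program_optimum (n x y z : R) :
  px ^+ 2 + py ^+ 2 + pz ^+ 2 = 1 -> 0 <= py <= px -> py <= pz -> 1 < px + pz ->
  witness_point n x y z ->
  (forall n' x' y' z', witness_point n' x' y' z' ->
     witness_value n' x' y' z' <= witness_value n x y z) ->
  [/\ z = x, n + x = 2, 0 <= y <= x & (px = py \/ pz = py -> y = x)].
Proof.
move=> p1 hy hyz xz_gap w hmax.
have A0 : 0 < A by rewrite /A; lra.
have n0 : 0 <= n by case: w.
have [edge | center] := lerP S (2 * (A - py)).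
  have [mx [mz [l [a [b [cert hab [yx yz]]]]]]] :=
    edge_certificate p1 (proj1 (andP hy)) A0 edge.
  have [-> -> -> nx] := certificate_optimum cert hab (mul0r _) w hmax.
  have [b0 ba] := andP hab.
  by split=> //; [rewrite mulr_ge0 ?ler_wpM2l | case=> e; lra].
have [mx [my [mz [l [t [cert t0]]]]]] := center_certificate p1 hy hyz A0 center.
have htt : 0 <= t <= t by rewrite t0 lexx.
have my_slack : my * (t - t) = 0 by rewrite subrr mulr0.
have [-> -> -> nx] := certificate_optimum cert htt my_slack w hmax.
by split=> //; rewrite lexx mulr_ge0.
Qed.

End Certificates.

End WitnessProgram.

Section Qubit.
Variable R : rcfType.
Local Notation C := R[i].
Local Notation Re := (@complex.Re R).
Local Notation Im := (@complex.Im R).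

Lemma ord2_0 : ord0 = 0 :> 'I_2. Proof. exact: val_inj. Qed.
Lemma ord2_1 : lift ord0 ord0 = 1 :> 'I_2. Proof. exact: val_inj. Qed.

Lemma ord2P (i : 'I_2) : i = 0 \/ i = 1.
Proof. by case: i => [[|[|//]] ?]; [left|right]; apply: val_inj. Qed.

Lemma cV2P (u v : 'cV[C]_2) : u 0 0 = v 0 0 -> u 1 0 = v 1 0 -> u = v.
Proof.
by move=> e0 e1; apply/matrixP => i j; rewrite (ord1 j); case: (ord2P i) => ->.
Qed.

Lemma M2P (A B : 'M[C]_2) :
  A 0 0 = B 0 0 -> A 0 1 = B 0 1 -> A 1 0 = B 1 0 -> A 1 1 = B 1 1 -> A = B.
Proof.
move=> e00 e01 e10 e11; apply/matrixP => i j.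
by case: (ord2P i) => ->; case: (ord2P j) => ->.
Qed.

Lemma vec2E (v : 'cV[C]_2) : v = vec2 (v 0 0) (v 1 0).
Proof. by apply: cV2P; rewrite !mxE. Qed.

Lemma braketE (u v : 'cV[C]_2) : braket u v = (u 0 0)^* * v 0 0 + (u 1 0)^* * v 1 0.
Proof. by rewrite /braket mxE !big_ord_recl big_ord0 !mxE addr0 ord2_0 ord2_1. Qed.

Lemma braketDr (w u v : 'cV[C]_2) : braket w (u + v) = braket w u + braket w v.
Proof. by rewrite /braket mulmxDr mxE. Qed.

Lemma braketZr (w v : 'cV[C]_2) (c : C) : braket w (c *: v) = c * braket w v.
Proof. by rewrite /braket -scalemxAr mxE. Qed.

Lemma braket0r (w : 'cV[C]_2) : braket w 0 = 0.
Proof. by rewrite /braket mulmx0 mxE. Qed.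

Lemma cabs_ge0 (z : C) : 0 <= cabs z.
Proof. by case: z => a b; apply: sqrtr_ge0. Qed.

Lemma sqr_cabs (z : C) : cabs z ^+ 2 = Re z ^+ 2 + Im z ^+ 2.
Proof. by case: z => a b; rewrite /cabs /= sqr_sqrtr // addr_ge0 ?sqr_ge0. Qed.

(* The squared norm of [v] and the expectations [<v|X|v>], [<v|Y|v>],
   [<v|Z|v>], i.e. [blochN v] times the Bloch vector of [v]. *)
Definition blochN (v : 'cV[C]_2) : R :=
  Re (v 0 0) ^+ 2 + Im (v 0 0) ^+ 2 + Re (v 1 0) ^+ 2 + Im (v 1 0) ^+ 2.
Definition blochX (v : 'cV[C]_2) : R :=
  2 * (Re (v 0 0) * Re (v 1 0) + Im (v 0 0) * Im (v 1 0)).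
Definition blochY (v : 'cV[C]_2) : R :=
  2 * (Re (v 0 0) * Im (v 1 0) - Im (v 0 0) * Re (v 1 0)).
Definition blochZ (v : 'cV[C]_2) : R :=
  Re (v 0 0) ^+ 2 + Im (v 0 0) ^+ 2 - Re (v 1 0) ^+ 2 - Im (v 1 0) ^+ 2.

Lemma bloch_vec2 (a1 a2 b1 b2 : R) : let v := vec2 (a1 +i* a2) (b1 +i* b2) in
  [/\ blochN v = a1 ^+ 2 + a2 ^+ 2 + b1 ^+ 2 + b2 ^+ 2,
      blochX v = 2 * (a1 * b1 + a2 * b2), blochY v = 2 * (a1 * b2 - a2 * b1)
    & blochZ v = a1 ^+ 2 + a2 ^+ 2 - b1 ^+ 2 - b2 ^+ 2].
Proof. by rewrite /blochN /blochX /blochY /blochZ !mxE. Qed.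

Lemma bloch_sqr (v : 'cV[C]_2) :
  blochX v ^+ 2 + blochY v ^+ 2 + blochZ v ^+ 2 = blochN v ^+ 2.
Proof. rewrite /blochN /blochX /blochY /blochZ; ring. Qed.

Lemma blochN_ge0 (v : 'cV[C]_2) : 0 <= blochN v.
Proof. by rewrite /blochN !addr_ge0 // sqr_ge0. Qed.

Lemma braket_self (v : 'cV[C]_2) : braket v v = (blochN v)%:C.
Proof.
rewrite braketE /blochN; case: (v 0 0) (v 1 0) => [a1 a2] [b1 b2].
by simpc; rewrite -complexr0 /=; congr (_ +i* _); ring.
Qed.

Lemma sqr_cabs_braket (u v : 'cV[C]_2) : cabs (braket u v) ^+ 2 =
  (blochN u * blochN v + blochX u * blochX v + blochY u * blochY v
   + blochZ u * blochZ v) / 2.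
Proof.
rewrite sqr_cabs braketE /blochN /blochX /blochY /blochZ.
case: (u 0 0) (u 1 0) (v 0 0) (v 1 0) => [a1 a2] [b1 b2] [c1 c2] [d1 d2].
by simpc => /=; field.
Qed.

Lemma ev_proj (v : 'cV[C]_2) :
  [/\ ev (proj v) (PX R) = blochX v, ev (proj v) (PY R) = blochY v
    & ev (proj v) (PZ R) = blochZ v].
Proof.
rewrite /ev /proj /PX /PY /PZ /mxtrace /blochX /blochY /blochZ.
rewrite !big_ord_recl !big_ord0 !mxE !big_ord_recl !big_ord0 !mxE !big_ord1 !mxE.
rewrite ord2_0 ord2_1 /=.
by split; case: (v 0 0) (v 1 0) => [a1 a2] [b1 b2]; simpc => /=; ring.
Qed.

Definition pauli_mx (n x y z : R) : 'M[C]_2 :=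
  n%:C *: 1%:M + x%:C *: PX R + y%:C *: PY R + z%:C *: PZ R.

Lemma proj_pauli (v : 'cV[C]_2) :
  proj v = pauli_mx (blochN v / 2) (blochX v / 2) (blochY v / 2) (blochZ v / 2).
Proof.
by apply: M2P; rewrite /proj /pauli_mx /PX /PY /PZ !mxE big_ord1 !mxE /=
  /blochN /blochX /blochY /blochZ;
  case: (v 0 0) (v 1 0) => [a1 a2] [b1 b2]; simpc => /=; congr (_ +i* _); field.
Qed.

Lemma omega_q_pauli (q : R) : let c := (1 + q / Num.sqrt 2)^-1 in
  omega_q q = pauli_mx c (c * q / Num.sqrt 2) (c * Num.sqrt (1 - q ^+ 2))
                       (c * q / Num.sqrt 2).
Proof.
move=> c; rewrite /omega_q /pauli_mx /PH /isr2 -/c !scalerDr !scalerA !rmorphM /=.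
have regroup (a b d e : 'M[C]_2) : a + (b + d) + e = a + b + e + d.
  by rewrite -!addrA (addrC d).
exact: regroup.
Qed.

Lemma omega_sym_pauli : let c := (1 + (Num.sqrt 3)^-1)^-1 in
  omega_sym R = pauli_mx c (c / Num.sqrt 3) (c / Num.sqrt 3) (c / Num.sqrt 3).
Proof.
move=> c; rewrite /omega_sym /pauli_mx -/c !scalerDr !scalerA !rmorphM /=.
by rewrite !addrA.
Qed.

(* Take [v 0 0 = sqrt ((n + z) / 2)] real; when [n + z = 0] the data is
   [(n, 0, 0, -n)] and [v = (0, sqrt n)]. *)
Lemma exists_bloch (n x y z : R) : 0 <= n -> x ^+ 2 + y ^+ 2 + z ^+ 2 = n ^+ 2 ->
  exists v : 'cV[C]_2,
    [/\ blochN v = n, blochX v = x, blochY v = y & blochZ v = z].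
Proof.
move=> n0 hxyz; have [nz0|nz0] := ltrP 0 (n + z); last first.
  have [nz_le nz_ge] : 0 <= - (n + z) /\ 0 <= n - z by split; lra.
  have zn : z = - n by have := mulr_ge0 nz_le nz_ge; nra.
  have [-> ->] : x = 0 /\ y = 0.
    by split; apply/eqP; rewrite -sqrf_eq0 eq_le sqr_ge0 andbT; nra.
  exists (vec2 (0 +i* 0) (Num.sqrt n +i* 0)); rewrite zn.
  by have [-> -> -> ->] := bloch_vec2 0 0 (Num.sqrt n) 0; rewrite sqr_sqrtr //; split; ring.
set a := Num.sqrt ((n + z) / 2).
have a2 : a ^+ 2 = (n + z) / 2 by rewrite sqr_sqrtr // divr_ge0 ?ltW.
have a0 : a != 0 by rewrite sqrtr_eq0 -ltNge divr_gt0.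
exists (vec2 (a +i* 0) ((x / (2 * a)) +i* (y / (2 * a)))).
have [-> -> -> ->] := bloch_vec2 a 0 (x / (2 * a)) (y / (2 * a)).
have hxy : (x / (2 * a)) ^+ 2 + (y / (2 * a)) ^+ 2 = (n - z) / 2.
  rewrite !expr_div_n -mulrDl exprMn a2 (_ : x ^+ 2 + y ^+ 2 = (n - z) * (n + z)).
    by field; rewrite gt_eqF.
  by lra.
rewrite expr0n /= addr0 -!addrA -opprD hxy a2.
by split; field.
Qed.

Definition stab_bloch (k : nat) : R * R * R :=
  match k with
  | 0 => (0, 0, 1) | 1 => (0, 0, -1) | 2 => (1, 0, 0)
  | 3 => (-1, 0, 0) | 4 => (0, 1, 0) | _ => (0, -1, 0)
  end.

Lemma bloch_stab (k : 'I_6) : [/\ blochN (stab R k) = 1,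
  blochX (stab R k) = (stab_bloch k).1.1, blochY (stab R k) = (stab_bloch k).1.2
  & blochZ (stab R k) = (stab_bloch k).2].
Proof.
have s2K : (Num.sqrt 2 : R)^-1 ^+ 2 = 2^-1 by rewrite exprVn sqr_sqrtr ?ler0n.
rewrite /blochN /blochX /blochY /blochZ /stab /stab_bloch /isr2.
case: k => [[|[|[|[|[|[|//]]]]]] ?]; rewrite !mxE /=; simpc => /=.
all: by rewrite -?expr2 ?sqrrN ?s2K; split; field.
Qed.

Lemma cabs_braket_phase (w v : 'cV[C]_2) (u : C) :
  cabs u = 1 -> cabs (braket w (u *: v)) = cabs (braket w v).
Proof. by move=> u1; rewrite braketZr /cabs normcM -/(cabs u) u1 mul1r. Qed.

Lemma witness_pointP (w : 'cV[C]_2) : is_witness w <->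
  witness_point (blochN w) (blochX w) (blochY w) (blochZ w).
Proof.
have stabP k : is_stab (stab R k) by exists k, 1; rewrite /cabs normc1 scale1r.
have le1E k : (cabs (braket w (stab R k)) <= 1) =
    (blochN w + blochX w * (stab_bloch k).1.1 + blochY w * (stab_bloch k).1.2
     + blochZ w * (stab_bloch k).2 <= 2).
  have [hN hX hY hZ] := bloch_stab k.
  rewrite -(expr_le1 (n := 2)) ?cabs_ge0 // sqr_cabs_braket hN hX hY hZ mulr1.
  by rewrite ler_pdivrMr ?mul1r.
rewrite /witness_point !addr_norm_le.
split=> [hw | [_ _ /andP[? ?] /andP[? ?] /andP[? ?]] _ [k [u [u1 ->]]]].
  have face i (lt_i6 : (i < 6)%N) := etrans (esym (le1E (Ordinal lt_i6))) (hw _ (stabP _)).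
  move: (face 0 isT) (face 1 isT) (face 2 isT) (face 3 isT) (face 4 isT) (face 5 isT).
  rewrite /stab_bloch /= => *.
  by split; [exact: blochN_ge0 | exact: bloch_sqr | ..]; apply/andP; split; lra.
rewrite cabs_braket_phase // le1E /stab_bloch.
by case: k => [[|[|[|[|[|[|//]]]]]] ?] /=; lra.
Qed.

Lemma is_stab_blochZ (v : 'cV[C]_2) : blochN v = 1 -> blochZ v = 1 -> is_stab v.
Proof.
rewrite (vec2E v); case: (v 0 0) (v 1 0) => [a1 a2] [b1 b2].
have [-> _ _ ->] := bloch_vec2 a1 a2 b1 b2 => hN hZ.
have [-> ->] : b1 = 0 /\ b2 = 0.
  by split; apply/eqP; rewrite -sqrf_eq0 eq_le sqr_ge0 andbT; nra.
exists 0, (a1 +i* a2); split; first by rewrite /cabs /= (_ : _ + _ = 1) ?sqrtr1 //; lra.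
by apply: cV2P; rewrite !mxE /= ?mulr1 ?mulr0.
Qed.

Lemma is_stab_blochX (v : 'cV[C]_2) : blochN v = 1 -> blochX v = 1 -> is_stab v.
Proof.
rewrite (vec2E v); case: (v 0 0) (v 1 0) => [a1 a2] [b1 b2].
have [-> -> _ _] := bloch_vec2 a1 a2 b1 b2 => hN hX.
have e : (a1 - b1) ^+ 2 + (a2 - b2) ^+ 2 = 0 by lra.
have [eb1 eb2] : b1 = a1 /\ b2 = a2.
  split; apply/eqP; rewrite -subr_eq0 -sqrf_eq0 eq_le sqr_ge0 andbT.
    by have := sqr_ge0 (a2 - b2); lra.
  by have := sqr_ge0 (a1 - b1); lra.
subst b1 b2; set s := Num.sqrt (2 : R).
have s2 : s ^+ 2 = 2 by rewrite sqr_sqrtr ?ler0n.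
have s0 : s != 0 by rewrite sqrtr_eq0 -ltNge ltr0n.
exists 2, ((s * a1) +i* (s * a2)); split.
  by rewrite /cabs /= !exprMn s2 (_ : _ + _ = 1) ?sqrtr1 //; lra.
by apply: cV2P; rewrite /stab /= !mxE /isr2 /=; simpc => /=; rewrite -/s;
  congr (_ +i* _); field.
Qed.

Lemma octant_axis (px py pz : R) : px ^+ 2 + py ^+ 2 + pz ^+ 2 = 1 ->
  0 <= py <= px -> py <= pz -> px + pz <= 1 -> px = 1 \/ pz = 1.
Proof.
move=> hp /andP[py0 pyx] pyz hxz.
have pxz0 : px * pz = 0 by apply/eqP; rewrite eq_le mulr_ge0 ?andbT; nra.
have py_0 : py = 0 by nra.
by move/eqP: pxz0; rewrite mulf_eq0 => /orP[]/eqP e; [right|left]; nra.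
Qed.

Lemma bloch_nonstab_gap (v : 'cV[C]_2) : blochN v = 1 -> ~ is_stab v ->
  0 <= blochY v <= blochX v -> blochY v <= blochZ v -> 1 < blochX v + blochZ v.
Proof.
move=> hN hns hyx hyz; rewrite ltNge; apply/negP => hxz.
have hp : blochX v ^+ 2 + blochY v ^+ 2 + blochZ v ^+ 2 = 1.
  by rewrite bloch_sqr hN expr1n.
by case: (octant_axis hp hyx hyz hxz) => h; apply: hns;
  [apply: is_stab_blochX | apply: is_stab_blochZ].
Qed.

Lemma cabs_braket_sum_le (w : 'cV[C]_2) (s : seq (C * 'cV[C]_2)) :
  is_witness w -> (forall p, p \in s -> is_stab p.2) ->
  cabs (braket w (\sum_(p <- s) p.1 *: p.2)) <= \sum_(p <- s) cabs p.1.
Proof.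
move=> hw; elim: s => [|p s IH] hs; first by rewrite !big_nil braket0r /cabs normc0.
rewrite !big_cons braketDr braketZr; apply: le_trans (le_normcD _ _) _.
rewrite normcM; apply: lerD; last by apply: IH => q hq; apply: hs; rewrite inE hq orbT.
rewrite -[X in _ <= X]mulr1 ler_wpM2l ?cabs_ge0 //.
by apply: hw; apply: hs; rewrite mem_head.
Qed.

Lemma xi_witness_max (psi omega v : 'cV[C]_2) :
  xi_is psi (cabs (braket psi omega) ^+ 2) -> is_witness v ->
  cabs (braket v psi) ^+ 2 <= cabs (braket psi omega) ^+ 2.
Proof.
move=> [[s [[hs ->] <-]] _] hv; rewrite /cost ler_sqr ?nnegrE ?cabs_ge0 //.
  exact: cabs_braket_sum_le.
by rewrite sumr_ge0 // => p _; apply: cabs_ge0.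
Qed.

Lemma xi_witness_value_max (psi omega : 'cV[C]_2) :
  blochN psi = 1 -> xi_is psi (cabs (braket psi omega) ^+ 2) ->
  forall n x y z, witness_point n x y z ->
  witness_value (blochX psi) (blochY psi) (blochZ psi) n x y z <=
  witness_value (blochX psi) (blochY psi) (blochZ psi)
    (blochN omega) (blochX omega) (blochY omega) (blochZ omega).
Proof.
move=> hN xi n x y z w; have [n0 hr _ _ _] := w.
have [v [vN vX vY vZ]] := exists_bloch n0 hr.
have hv : is_witness v by apply/witness_pointP; rewrite vN vX vY vZ.
have := xi_witness_max xi hv; rewrite !sqr_cabs_braket hN vN vX vY vZ /witness_value.
lra.
Qed.

Lemma proj_omega_q (w : 'cV[C]_2) :
  blochZ w = blochX w -> blochN w + blochX w = 2 -> 0 <= blochY w <= blochX w ->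
  exists q : R, Num.sqrt (2 / 3) <= q <= 1 /\ proj w = omega_q q.
Proof.
move=> zx nx /andP[y0 yx]; have := bloch_sqr w; have := blochN_ge0 w.
rewrite proj_pauli zx; move: (blochN w) (blochX w) (blochY w) nx y0 yx => n x y nx y0 yx n0 hr.
have n_gt0 : 0 < n by nra.
have n_neq0 : n != 0 by rewrite gt_eqF.
set s2 := Num.sqrt (2 : R).
have s2_sqr : s2 ^+ 2 = 2 by rewrite sqr_sqrtr ?ler0n.
have s2_gt0 : 0 < s2 by rewrite sqrtr_gt0 ltr0n.
have s2_neq0 : s2 != 0 by rewrite gt_eqF.
exists (s2 * x / n).
have q2 : (s2 * x / n) ^+ 2 = 2 * x ^+ 2 / n ^+ 2 by rewrite !exprMn exprVn s2_sqr.
have q0 : 0 <= s2 * x / n by rewrite divr_ge0 ?mulr_ge0 ?(ltW s2_gt0) ?(ltW n_gt0) //; lra.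
have n2 : 0 < n ^+ 2 by rewrite exprn_gt0.
split.
  have q2_ge : 2 / 3 <= (s2 * x / n) ^+ 2 by rewrite q2 ler_pdivlMr //; nra.
  have q2_le : (s2 * x / n) ^+ 2 <= 1 by rewrite q2 ler_pdivrMr // mul1r; nra.
  apply/andP; split; last by rewrite -(expr_le1 (n := 2)).
  by rewrite -(ger0_norm q0) -sqrtr_sqr ler_sqrt ?sqr_ge0.
rewrite omega_q_pauli /=.
have -> : Num.sqrt (1 - (s2 * x / n) ^+ 2) = y / n.
  rewrite -[y / n]ger0_norm ?divr_ge0 ?(ltW n_gt0) // -sqrtr_sqr; congr Num.sqrt.
  have hr' : y ^+ 2 + 2 * x ^+ 2 = n ^+ 2 by rewrite -hr; ring.
  by rewrite q2 expr_div_n; apply/eqP; rewrite subr_eq -mulrDl hr' divff // gt_eqF.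
have qx : s2 * x / n / Num.sqrt 2 = x / n.
  by rewrite -/s2; field; rewrite n_neq0 s2_neq0.
have c_eq : (1 + s2 * x / n / Num.sqrt 2)^-1 = n / 2.
  by rewrite qx (_ : 1 + x / n = 2 / n) ?invf_div // -nx; field.
have cx : n / 2 * (s2 * x / n) / Num.sqrt 2 = x / 2.
  by rewrite -/s2; field; rewrite n_neq0 s2_neq0.
have cy : n / 2 * (y / n) = y / 2 by field.
by rewrite c_eq cx cy.
Qed.

Lemma proj_omega_sym (w : 'cV[C]_2) : blochY w = blochX w -> blochZ w = blochX w ->
  blochN w + blochX w = 2 -> 0 <= blochX w -> proj w = omega_sym R.
Proof.
move=> yx zx nx x0; have := bloch_sqr w; have := blochN_ge0 w.
rewrite proj_pauli yx zx omega_sym_pauli /=.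
move: (blochN w) (blochX w) nx x0 => n x nx x0 n0 hr.
set s3 := Num.sqrt (3 : R).
have s3_gt0 : 0 < s3 by rewrite sqrtr_gt0 ltr0n.
have s3_neq0 : s3 != 0 by rewrite gt_eqF.
have ns3 : n = s3 * x.
  apply/eqP; rewrite -(eqrXn2 (n := 2)) ?mulr_ge0 ?(ltW s3_gt0) //.
  by rewrite exprMn sqr_sqrtr ?ler0n // -hr; apply/eqP; ring.
have s31_neq0 : 1 + s3 != 0 by rewrite gt_eqF //; lra.
have s3D1_neq0 : s3 + 1 != 0 by rewrite addrC.
have xs3 : x = 2 / (1 + s3).
  by rewrite -nx ns3 -[x in LHS](mulfK s31_neq0); congr (_ / _); ring.
have en : n / 2 = (1 + s3^-1)^-1.
  by rewrite ns3 xs3; field; rewrite s3_neq0 s3D1_neq0.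
have ex : x / 2 = (1 + s3^-1)^-1 / s3.
  by rewrite xs3; field; rewrite s3_neq0 s3D1_neq0.
by rewrite en ex.
Qed.
End Qubit.

Theorem lemma3 (R : rcfType) (psi omega : 'cV[R[i]]_2) :
  braket psi psi = 1 ->
  ~ is_stab psi ->
  inPY (proj psi) ->
  is_witness omega ->
  xi_is psi (cabs (braket psi omega) ^+ 2) ->
  (exists q : R, Num.sqrt (2 / 3) <= q <= 1 /\ proj omega = omega_q q) /\
  (inPX (proj psi) \/ inPZ (proj psi) -> proj omega = omega_sym R).
Proof.
move=> psi1 nonstab inPY wit xi.
have N1 : blochN psi = 1 by move: psi1; rewrite braket_self; case.
have [evX evY evZ] := ev_proj psi.
move: inPY; rewrite /inPY /inP evX evY evZ => -[[_ [y0 _]] [yx yz]].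
have hyx : 0 <= blochY psi <= blochX psi by rewrite y0 yx.
have p1 : blochX psi ^+ 2 + blochY psi ^+ 2 + blochZ psi ^+ 2 = 1.
  by rewrite bloch_sqr N1 expr1n.
have [zx nx hyx' y_eq] := witness_program_optimum p1 hyx yz
  (bloch_nonstab_gap N1 nonstab hyx yz) (proj1 (witness_pointP omega) wit)
  (xi_witness_value_max N1 xi).
split; first exact: proj_omega_q zx nx hyx'.
rewrite /inPX /inPZ evX evY evZ => faces.
have x0 : 0 <= blochX omega by case/andP: hyx'; apply: le_trans.
apply: proj_omega_sym (y_eq _) zx nx x0.
by case: faces => [[_ [xy _]] | [_ [_ zy]]]; [left | right]; apply/eqP;
  rewrite eq_le ?xy ?zy ?yx ?yz.
Qed.
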